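(* Let $\mathcal D\subseteq(0,1)$ and $f:\mathcal D\to(0,1)$. Then $f$ has a block simulation if and only if there exist an integer $k\ge0$ and integers $d_0,\dots,d_k,e_0,\dots,e_k$ with $0\le d_i\le e_i$ for all $i$ such that, writing $D(p)=\sum_{i=0}^k d_ip^i(1-p)^{k-i}$ and $E(p)=\sum_{i=0}^k e_ip^i(1-p)^{k-i}$, one has $E(p)\ne0$ and $f(p)=D(p)/E(p)$ for all $p\in\mathcal D$.
   Context: For $w\in\{0,1\}^*$ let $n_i(w)$ be the number of $i$'s in $w$; $\mathbf P_p[w]=p^{n_1(w)}(1-p)^{n_0(w)}$, $\mathbf P_p[L]=\sum_{w\in L}\mathbf P_p[w]$. A simulation of $f:\mathcal D\to[0,1]$ is a pair of disjoint languages $L_0,L_1\subseteq\{0,1\}^*$ with $L_0\cup L_1$ prefix-free such that $\mathbf P_p[L_0\cup L_1]=1$ and $\mathbf P_p[L_1]=f(p)$ for all $p\in\mathcal D$. A block simulation of $f$ is a simulation of the following form: for some $k\ge1$ and disjoint sets $A_0,A_1\subseteq\{0,1\}^k$, with $A'=\{0,1\}^k\setminus(A_0\cup A_1)$, one has $L_i=(A')^*A_i$, the set of concatenations $u_1\cdots u_mv$ with $m\ge0$, $u_j\in A'$, $v\in A_i$. *)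

From HB Require Import structures.
From mathcomp Require Import all_boot all_order all_algebra.
From mathcomp Require Import all_classical all_reals.
From mathcomp Require Import ereal esum.

Set Implicit Arguments.
Unset Strict Implicit.
Unset Printing Implicit Defensive.

Import Order.TTheory GRing.Theory Num.Theory.
Local Open Scope classical_set_scope.
Local Open Scope ring_scope.

(* Words over {0,1} are bit sequences: true = 1, false = 0. *)
Definition word := seq bool.

Definition n1 (w : word) : nat := count id w.
Definition n0 (w : word) : nat := count negb w.

Definition Pw {R : realType} (p : R) (w : word) : R :=
  p ^+ n1 w * (1 - p) ^+ n0 w.

Definition PL {R : realType} (p : R) (L : set word) : \bar R :=
  \esum_(w in L) (Pw p w)%:E.

Definition prefix_free (L : set word) : Prop :=
  forall u v, L u -> L v -> prefix u v -> u = v.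

Definition simulation {R : realType} (D : set R) (f : R -> R)
  (L0 L1 : set word) : Prop :=
  [/\ L0 `&` L1 = set0,
      prefix_free (L0 `|` L1) &
      forall p, D p -> PL p (L0 `|` L1) = 1%E /\ PL p L1 = (f p)%:E].

Definition star_cat (A' A : set word) : set word :=
  [set w | exists (us : seq word) (v : word),
      [/\ (forall u, u \in us -> A' u), A v & w = flatten us ++ v]].

Definition has_block_simulation {R : realType} (D : set R) (f : R -> R) : Prop :=
  exists (k : nat) (A0 A1 : set word),
    [/\ (0 < k)%N,
        A0 `<=` [set w | size w = k],
        A1 `<=` [set w | size w = k],
        A0 `&` A1 = set0 &
        let A' := [set w | size w = k] `\` (A0 `|` A1) in
        simulation D f (star_cat A' A0) (star_cat A' A1)].

Definition bern_poly {R : realType} (k : nat) (c : nat -> nat) (p : R) : R :=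
  \sum_(i < k.+1) (c i)%:R * p ^+ i * (1 - p) ^+ (k - i).

From HB Require Import structures.
From mathcomp Require Import all_boot all_order all_algebra.
From mathcomp Require Import all_classical all_reals.
From mathcomp Require Import ereal esum topology normedtype sequences.
From mathcomp Require Import zify.
Import Order.TTheory GRing.Theory Num.Theory.
Local Open Scope classical_set_scope.
Local Open Scope ring_scope.

Set Implicit Arguments.
Unset Strict Implicit.
Unset Printing Implicit Defensive.

(* A block simulation draws blocks of length [k] until one falls in
   [S = A0 `|` A1]; by the geometric series, [P_p[L_i] = P_p[A_i] / P_p[S]].
   For a set [A] of words of length [k], [P_p[A]] is the Bernstein-form
   polynomial whose [i]-th coefficient counts the words of [A] with [i] ones,
   so [f = D / E] with [D] counting [A1] and [E] counting [S].  Conversely,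
   coefficients [d_i <= e_i] are realised as such counts by nested sets of
   words of a common length, words of equal weight being told apart by a
   padding whose probability does not depend on it. *)

Lemma ge0_esumZl (R : realType) (T : choiceType) (I : set T) (a : T -> \bar R)
    (r : R) : 0 <= r -> (forall i, 0 <= a i)%E ->
  (\esum_(i in I) (r%:E * a i) = r%:E * \esum_(i in I) a i)%E.
Proof.
move=> r0 a0; rewrite /esum -ereal_supZl//; last first.
  by apply/set0P; exists (\sum_(x \in set0) a x)%E; exists set0 => //; exact: fsets_set0.
congr ereal_sup; apply/seteqP; split=> x /=.
  by move=> [A fA <-]; exists (\sum_(x \in A) a x)%E; [exists A|rewrite ge0_mule_fsumr].
by move=> [y [A fA <-] <-]; exists A => //; rewrite ge0_mule_fsumr.
Qed.

Lemma esum_II (R : realType) n (f : nat -> R) : (forall i, 0 <= f i) ->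
  (\esum_(i in `I_n) (f i)%:E)%E = (\sum_(i < n) f i)%:E.
Proof.
move=> f0; rewrite esum_fset; [|exact: finite_II|by move=> i _; rewrite lee_fin].
by rewrite -fsbig_ord sumEFin.
Qed.

Lemma esum_finType (R : realType) (T : finType) (X : set T) (f : T -> R) :
  (forall t, 0 <= f t) ->
  (\esum_(t in X) (f t)%:E)%E = (\sum_(t | t \in X) f t)%:E.
Proof.
move=> f0; rewrite esum_fset; [|exact: finite_finset|by move=> i _; rewrite lee_fin].
rewrite fsbig_finite; last exact: finite_finset.
rewrite big_uniq; last exact: finmap.fset_uniq.
by rewrite -sumEFin; apply: eq_bigl => t; rewrite in_fset_set //; exact: finite_finset.
Qed.

Lemma nneseries_geometric (R : realType) (a b : R) : 0 <= b -> b < 1 \/ a = 0 ->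
  (\sum_(i <oo) (b ^+ i * a)%:E)%E = (a / (1 - b))%:E.
Proof.
move=> b0 [b1|->]; last by rewrite mul0r eseries0 // => i _ _; rewrite mulr0.
apply: cvg_lim => //; apply: cvg_EFin; first by apply: nearW => n; rewrite sumEFin.
have := @cvg_geometric_series R a b; rewrite ger0_norm // => /(_ b1).
apply: cvg_trans; apply: near_eq_cvg; apply: nearW => n /=.
by rewrite sumEFin /= seriesEnat; apply: eq_bigr => i _; rewrite mulrC.
Qed.

Lemma cat_eq_size (T : eqType) (x y r s : seq T) :
  size x = size y -> x ++ r = y ++ s -> x = y /\ r = s.
Proof. by move=> sxy /eqP; rewrite eqseq_cat // => /andP[/eqP-> /eqP->]. Qed.

Lemma n1_cat u w : n1 (u ++ w) = (n1 u + n1 w)%N.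
Proof. exact: count_cat. Qed.

Lemma n0_cat u w : n0 (u ++ w) = (n0 u + n0 w)%N.
Proof. exact: count_cat. Qed.

Lemma n1_map_negb w : n1 (map negb w) = n0 w.
Proof. exact: count_map. Qed.

Lemma n0_map_negb w : n0 (map negb w) = n1 w.
Proof. by rewrite /n0 count_map; apply: eq_count => -[]. Qed.

Lemma n1_le_size w : (n1 w <= size w)%N.
Proof. exact: count_size. Qed.

Lemma n1_add_n0 w : (n1 w + n0 w)%N = size w.
Proof. exact: count_predC. Qed.

Lemma Pw_cat (R : realType) (p : R) u w : Pw p (u ++ w) = Pw p u * Pw p w.
Proof. by rewrite /Pw n1_cat n0_cat !exprD mulrACA. Qed.

Lemma Pw_ge0 (R : realType) (p : R) w : 0 <= p <= 1 -> 0 <= Pw p w.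
Proof. by move=> /andP[p0 p1]; rewrite mulr_ge0 // exprn_ge0 // subr_ge0. Qed.

Definition words (k : nat) : set word := [set w | size w = k].

Lemma cat_eq_words k (x y r s : word) : words k x -> words k y ->
  x ++ r = y ++ s -> x = y /\ r = s.
Proof. by move=> xk yk; apply: cat_eq_size; rewrite xk yk. Qed.

Definition cat_set (X Y : set word) : set word :=
  (fun z : word * word => z.1 ++ z.2) @` (X `*` Y).

Lemma words0 : words 0 = [set [::]].
Proof. by apply/seteqP; split => [[]|w ->]. Qed.

Lemma words1 : words 1 = [set [:: true]] `|` [set [:: false]].
Proof.
apply/seteqP; split => [w|w [] ->] //.
by case: w => [|[] [|]] //= _; [left|right].
Qed.

Lemma wordsS k : words k.+1 = cat_set (words 1) (words k).
Proof.
apply/seteqP; split => [[|b w] //= [sw]|_ [[u v] [/= su sv] <-]].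
  by exists ([:: b], w).
by rewrite /words /= size_cat su sv.
Qed.

Section WordProbability.
Variables (R : realType) (p : R).
Hypothesis hp : 0 <= p <= 1.

Lemma PL_ge0 A : (0 <= PL p A)%E.
Proof. by apply: esum_ge0 => w _; rewrite lee_fin Pw_ge0. Qed.

Lemma PL_setD A B : A `<=` B -> PL p B = (PL p A + PL p (B `\` A))%E.
Proof.
move=> AB; rewrite /PL (esumID A); last by move=> w _; rewrite lee_fin Pw_ge0.
by rewrite setDE (setIidr AB).
Qed.

Lemma le_PL A B : A `<=` B -> (PL p A <= PL p B)%E.
Proof. by move=> AB; rewrite (PL_setD AB) leeDl // PL_ge0. Qed.

Lemma PL_set1 w : PL p [set w] = (Pw p w)%:E.
Proof. by rewrite /PL esum_set1 // lee_fin Pw_ge0. Qed.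

Lemma PL_cat_set k X Y x : X `<=` words k -> PL p X = x%:E ->
  PL p (cat_set X Y) = (x%:E * PL p Y)%E.
Proof.
move=> Xk PX; have x0 : 0 <= x by rewrite -lee_fin -PX PL_ge0.
have Pw0 w : (0 <= (Pw p w)%:E)%E by rewrite lee_fin Pw_ge0.
rewrite /PL /cat_set esum_image; last first.
  move=> [u w] [u' w'] /set_mem[/Xk uk _] /set_mem[/Xk u'k _] /= e.
  by have /= [-> ->] := cat_eq_words uk u'k e.
rewrite (reindex_esum (Y `*` X) (X `*` Y) (fun z => (z.2, z.1))); last first.
  split=> [[a b] [/= Ya Xb]|[a b] [a' b'] _ _ /= [-> ->]|[a b] [Xa Yb]] //.
  by exists (b, a).
transitivity (\esum_(z in Y `*`` (fun _ => X)) ((Pw p z.2)%:E * (Pw p z.1)%:E))%E.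
  by apply: eq_esum => z _ /=; rewrite Pw_cat EFinM.
rewrite -(esum_esum (a := fun i j => (Pw p j)%:E * (Pw p i)%:E)%E); last first.
  by move=> i j _ _; rewrite mule_ge0.
rewrite -ge0_esumZl //; apply: eq_esum => w _.
rewrite -PX /PL muleC -ge0_esumZl ?Pw_ge0 //.
by apply: eq_esum => u _; rewrite muleC.
Qed.

Lemma PL_words k : PL p (words k) = 1%E.
Proof.
have PL_words1 : PL p (words 1) = 1%E.
  rewrite (@PL_setD [set [:: true]]); last by rewrite words1; exact: subsetUl.
  have -> : words 1 `\` [set [:: true]] = [set [:: false]].
    rewrite words1 setDUl setDv set0U; apply/setDidPl.
    by rewrite -subset0 => w [/= ->].
  by rewrite !PL_set1 /Pw /= !expr0 !expr1 mulr1 mul1r -EFinD addrC subrK.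
elim: k => [|k IH]; first by rewrite words0 PL_set1 /Pw /= mulr1.
by rewrite wordsS (@PL_cat_set 1 _ _ 1) // IH mule1.
Qed.

Lemma PL_sub_words k A : A `<=` words k -> exists2 a, PL p A = a%:E & 0 <= a <= 1.
Proof.
move=> Ak; have A0 := PL_ge0 A.
have A1 : (PL p A <= 1)%E by rewrite -(PL_words k) le_PL.
have Afin : PL p A \is a fin_num by rewrite ge0_fin_numE // (le_lt_trans A1) // ltey.
by exists (fine (PL p A)); rewrite ?fineK // -!lee_fin fineK // A0.
Qed.

End WordProbability.

Definition layer (B A : set word) (m : nat) : set word := iter m (cat_set B) A.

Lemma star_cat_bigcup B A : star_cat B A = \bigcup_m layer B A m.
Proof.
apply/seteqP; split => w.
  move=> [us [v [Bus Av ->]]]; exists (size us) => //.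
  elim: us Bus => [|u us IH] Bus //=.
  exists (u, flatten us ++ v); last by rewrite /= catA.
  split; first by apply: Bus; rewrite mem_head.
  by apply: IH => x xus; apply: Bus; rewrite in_cons xus orbT.
move=> [m _]; elim: m w => [|m IH] w /=; first by exists [::], w.
move=> [[u w'] [/= Bu /IH [us [v [Bus Av ->]]]] <-].
exists (u :: us), v; split => //=; last by rewrite catA.
by move=> x; rewrite in_cons => /orP[/eqP ->|/Bus].
Qed.

Lemma star_catU B X Y : star_cat B X `|` star_cat B Y = star_cat B (X `|` Y).
Proof.
apply/seteqP; split => w.
  by move=> [] [us [v [Bus Xv ->]]]; exists us, v; split => //; [left|right].
by move=> [us [v [Bus [Xv|Yv] ->]]]; [left|right]; exists us, v.
Qed.

Lemma layer_sub_words k B A m : A `<=` words k -> B `<=` words k ->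
  layer B A m `<=` words (m * k + k).
Proof.
move=> Ak Bk; elim: m => [|m IH] w /=; first exact: Ak.
move=> [[u w'] [/= /Bk su /IH sw] <-].
by rewrite /words /= size_cat su sw mulSn addnA.
Qed.

Lemma trivIset_layer k B A : (0 < k)%N -> A `<=` words k -> B `<=` words k ->
  trivIset setT (layer B A).
Proof.
move=> k0 Ak Bk i j _ _ [w [/(layer_sub_words Ak Bk) wi /(layer_sub_words Ak Bk) wj]].
by move: wi wj; rewrite /words /= => -> /eqP; rewrite eqn_add2r eqn_mul2r (gtn_eqF k0) => /eqP.
Qed.

Section StarProbability.
Variables (R : realType) (p : R).
Hypothesis hp : 0 <= p <= 1.

Lemma PL_layer k B A a b : B `<=` words k -> PL p B = b%:E -> PL p A = a%:E ->
  forall m, PL p (layer B A m) = (b ^+ m * a)%:E.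
Proof.
move=> Bk PB PA; elim => [|m IH] /=; first by rewrite expr0 mul1r.
by rewrite (PL_cat_set hp _ Bk PB) IH -EFinM exprS mulrA.
Qed.

Lemma PL_star_cat k B A a b : (0 < k)%N -> A `<=` words k -> B `<=` words k ->
  PL p B = b%:E -> PL p A = a%:E ->
  PL p (star_cat B A) = (\sum_(i <oo) (b ^+ i * a)%:E)%E.
Proof.
move=> k0 Ak Bk PB PA.
rewrite /PL star_cat_bigcup nneseries_sum_bigcup; last 2 first.
- exact: trivIset_layer k0 Ak Bk.
- by move=> w; rewrite lee_fin Pw_ge0.
by congr (limn _); apply/funext => n; apply: eq_bigr => i _; rewrite -(PL_layer Bk PB PA).
Qed.

End StarProbability.

Section StoppingSet.
Variables (k : nat) (S : set word).
Hypotheses (k0 : (0 < k)%N) (Sk : S `<=` words k).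

Let rej := words k `\` S.

Lemma rej_words : rej `<=` words k.
Proof. by move=> w []. Qed.

(* The blocks are read off from the left: a block is in [S] exactly when it
   is the last one. *)
Lemma star_cat_blocks_uniq us us' v v' s :
  (forall u, u \in us -> rej u) -> (forall u, u \in us' -> rej u) -> S v -> S v' ->
  flatten us ++ v ++ s = flatten us' ++ v' -> [/\ us = us', v = v' & s = [::]].
Proof.
elim: us us' => [|u us IH] [|u' us'] /= rej_us rej_us' Sv Sv'.
- by rewrite -[RHS]cats0 => /(cat_eq_words (Sk Sv) (Sk Sv')) [-> ->].
- have [u'k NSu'] := rej_us' u' (mem_head _ _).
  by rewrite -catA => /(cat_eq_words (Sk Sv) u'k) [vu' _]; rewrite vu' in Sv.
- have uk := rej_words (rej_us u (mem_head _ _)).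
  by move=> /(congr1 size); rewrite !size_cat uk (Sk Sv) (Sk Sv'); lia.
- have uk := rej_words (rej_us u (mem_head _ _)).
  have u'k := rej_words (rej_us' u' (mem_head _ _)).
  have rej_us1 x : x \in us -> rej x.
    by move=> xus; apply: rej_us; rewrite in_cons xus orbT.
  have rej_us1' x : x \in us' -> rej x.
    by move=> xus'; apply: rej_us'; rewrite in_cons xus' orbT.
  rewrite -!catA => /(cat_eq_words uk u'k) [-> e].
  by have [-> -> ->] := IH us' rej_us1 rej_us1' Sv Sv' e.
Qed.

Lemma prefix_free_star_cat : prefix_free (star_cat rej S).
Proof.
move=> u w [us [v [rej_us Sv ->]]] [us' [v' [rej_us' Sv' ->]]] /prefixP [s e].
have e' : flatten us ++ v ++ s = flatten us' ++ v' by rewrite catA e.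
by have [-> -> _] := star_cat_blocks_uniq rej_us rej_us' Sv Sv' e'.
Qed.

Lemma star_cat_disjoint X Y : X `<=` S -> Y `<=` S -> X `&` Y = set0 ->
  star_cat rej X `&` star_cat rej Y = set0.
Proof.
move=> XS YS XY0; rewrite -subset0 => w [[us [v [rej_us Xv ->]]] [us' [v' [rej_us' Yv' e]]]].
have e' : flatten us ++ v ++ [::] = flatten us' ++ v' by rewrite cats0.
have [_ vv' _] := star_cat_blocks_uniq rej_us rej_us' (XS _ Xv) (YS _ Yv') e'.
have : (X `&` Y) v by split => //; rewrite vv'.
by rewrite XY0.
Qed.

Lemma PL_star_cat_stop (R : realType) (p : R) X a c : 0 <= p <= 1 -> X `<=` S ->
  PL p X = a%:E -> PL p S = c%:E -> PL p (star_cat rej X) = (a / c)%:E.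
Proof.
move=> hp XS PX PS; have [b Prej /andP[b0 _]] := PL_sub_words hp rej_words.
have cb1 : c + b = 1.
  by apply: EFin_inj; rewrite EFinD -PS -Prej -(PL_words hp k) (PL_setD hp Sk).
have a0 : 0 <= a by rewrite -lee_fin -PX PL_ge0.
have ac : a <= c by rewrite -lee_fin -PX -PS le_PL.
rewrite (PL_star_cat hp k0 (subset_trans XS Sk) rej_words Prej PX).
rewrite nneseries_geometric //; first by rewrite -cb1 addrK.
(* if [b = 1] then [c = 0], and the series vanishes because [0 <= a <= c] *)
have [b1|b1] := ltP b 1; [by left|right].
by apply/eqP; rewrite eq_le a0 andbT (le_trans ac) // -[c](addrK b) cb1 subr_le0.
Qed.
End StoppingSet.

Definition weight_count k (A : set word) (i : nat) : nat :=
  #|[pred t : k.-tuple bool | (val t \in A) && (n1 t == i)]|.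

Lemma weight_count_subset k A B i : A `<=` B ->
  (weight_count k A i <= weight_count k B i)%N.
Proof.
move=> AB; apply: subset_leq_card; apply/fintype.subsetP => t; rewrite !inE.
by move=> /andP[/set_mem /AB /mem_set -> ->].
Qed.

Lemma PL_bern_poly (R : realType) (p : R) k A : 0 <= p <= 1 -> A `<=` words k ->
  PL p A = (bern_poly k (weight_count k A) p)%:E.
Proof.
move=> hp Ak.
have eA : A = val @` [set t : k.-tuple bool | A (val t)].
  apply/seteqP; split => [w Aw|_ [t /= At <-] //].
  by exists (@Tuple k bool w (introT eqP (Ak w Aw))).
rewrite /PL {1}eA esum_image; last by move=> t1 t2 _ _; exact: val_inj.
rewrite esum_finType; last by move=> t; exact: Pw_ge0.
congr _%:E; rewrite /bern_poly.
have n1_tuple (t : k.-tuple bool) : (n1 t < k.+1)%N.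
  by rewrite ltnS -{2}(size_tuple t) n1_le_size.
rewrite (partition_big (fun t : k.-tuple bool => (inord (n1 t) : 'I_k.+1)) xpredT) //=.
apply: eq_bigr => i _.
rewrite (eq_bigr (fun _ => p ^+ i * (1 - p) ^+ (k - i))); last first.
  move=> t /andP[_ /eqP <-]; rewrite inordK // /Pw.
  by rewrite -[k in (k - _)%N](size_tuple t) -n1_add_n0 addKn.
rewrite sumr_const -mulrA mulr_natl; congr (_ *+ _); apply: eq_card => t.
by rewrite !inE; congr andb; rewrite -val_eqE /= inordK.
Qed.

Definition has_bern_ratio (R : realType) (D : set R) (f : R -> R) : Prop :=
  exists (k : nat) (d e : nat -> nat),
    (forall i, (i <= k)%N -> (d i <= e i)%N) /\
    (forall p, D p -> bern_poly k e p != 0 /\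
                      f p = bern_poly k d p / bern_poly k e p).

Lemma block_simulation_bern_ratio (R : realType) (D : set R) (f : R -> R) :
  (forall p, D p -> 0 <= p <= 1) -> has_block_simulation D f -> has_bern_ratio D f.
Proof.
move=> hD [k [A0 [A1 [k0 A0k A1k _ /= [_ _ PLsim]]]]].
have Sk : A0 `|` A1 `<=` words k by move=> w [/A0k|/A1k].
exists k, (weight_count k A1), (weight_count k (A0 `|` A1)); split.
  by move=> i _; apply: weight_count_subset; exact: subsetUr.
move=> p Dp; have hp := hD p Dp; have [PLstop PLf] := PLsim p Dp.
have PS := PL_bern_poly hp Sk.
rewrite star_catU (PL_star_cat_stop k0 Sk hp (@subset_refl _ _) PS PS) in PLstop.
rewrite (PL_star_cat_stop k0 Sk hp (@subsetUr _ _ _) (PL_bern_poly hp A1k) PS) in PLf.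
case: PLf => <-; split => //; apply/eqP => E0.
by move: PLstop; rewrite E0 mul0r => -[] /eqP; rewrite eq_sym oner_eq0.
Qed.

Definition unary (a m : nat) : word := nseq a true ++ nseq (m - a) false.

Lemma size_unary a m : (a <= m)%N -> size (unary a m) = m.
Proof. by move=> am; rewrite size_cat !size_nseq subnKC. Qed.

Lemma n1_unary a m : n1 (unary a m) = a.
Proof. by rewrite n1_cat /n1 !count_nseq /= mul1n mul0n addn0. Qed.

Lemma n0_unary a m : n0 (unary a m) = (m - a)%N.
Proof. by rewrite n0_cat /n0 !count_nseq /= mul1n mul0n. Qed.

Section PaddedCode.
Variables (k M : nat).

(* The padding [unary c M ++ map negb (unary c M)] has probability
   [p ^+ M * (1 - p) ^+ M] whatever [c] is, so [c] can index up to [M] words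
   of each weight [i] without changing their probability. *)
Definition padded_word (z : nat * nat) : word :=
  unary z.1 k ++ unary z.2 M ++ map negb (unary z.2 M).

Definition code_index (g : nat -> nat) : set (nat * nat) :=
  `I_k.+1 `*`` (fun i => [set c | (c < g i)%N]).

Definition padded_code (g : nat -> nat) : set word := padded_word @` code_index g.

Lemma size_padded_word z : (z.1 <= k)%N -> (z.2 <= M)%N ->
  size (padded_word z) = (k + M + M)%N.
Proof.
move=> z1k z2M; rewrite [LHS]size_cat (size_unary z1k) size_cat size_map.
by rewrite (size_unary z2M) addnA.
Qed.

Lemma Pw_padded_word (R : realType) (p : R) z : (z.1 <= k)%N -> (z.2 <= M)%N ->
  Pw p (padded_word z) = p ^+ M * (1 - p) ^+ M * (p ^+ z.1 * (1 - p) ^+ (k - z.1)).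
Proof.
move=> z1k z2M; rewrite [LHS]Pw_cat [X in _ * X]Pw_cat {3}/Pw n1_map_negb n0_map_negb.
rewrite /Pw !n1_unary !n0_unary.
by rewrite mulrC; congr (_ * _); rewrite mulrACA -!exprD subnKC // subnK.
Qed.

Lemma padded_word_inj z z' : (z.1 <= k)%N -> (z.2 <= M)%N ->
  (z'.1 <= k)%N -> (z'.2 <= M)%N -> padded_word z = padded_word z' -> z = z'.
Proof.
case: z z' => [i c] [i' c'] /= ik cM i'k c'M.
move=> /(cat_eq_size (etrans (size_unary ik) (esym (size_unary i'k)))) [e1].
move=> /(cat_eq_size (etrans (size_unary cM) (esym (size_unary c'M)))) [e2 _].
by rewrite -(n1_unary i k) -(n1_unary c M) e1 e2 !n1_unary.
Qed.

Section BoundedCounts.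
Variable g : nat -> nat.
Hypothesis gM : forall i, (i <= k)%N -> (g i <= M)%N.

Lemma code_index_bounded z : code_index g z -> (z.1 <= k)%N /\ (z.2 <= M)%N.
Proof.
by case: z => i c [/= ik cg]; split; [|apply: leq_trans (ltnW cg) (gM _)].
Qed.

Lemma padded_code_words : padded_code g `<=` words (k + M + M).
Proof.
by move=> _ [z /code_index_bounded [z1k z2M] <-]; exact: size_padded_word.
Qed.

Lemma PL_padded_code (R : realType) (p : R) : 0 <= p <= 1 ->
  PL p (padded_code g) = (p ^+ M * (1 - p) ^+ M * bern_poly k g p)%:E.
Proof.
move=> /andP[p0 p1]; have p1' : 0 <= 1 - p by rewrite subr_ge0.
rewrite /PL esum_image; last first.
  move=> z z' /set_mem /code_index_bounded [z1k z2M].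
  by move=> /set_mem /code_index_bounded [z'1k z'2M]; exact: padded_word_inj.
set cM := p ^+ M * (1 - p) ^+ M.
have cM0 : 0 <= cM by rewrite mulr_ge0 // exprn_ge0.
set q := fun i => p ^+ i * (1 - p) ^+ (k - i).
have q0 i : 0 <= q i by rewrite mulr_ge0 // exprn_ge0.
transitivity (\esum_(z in code_index g) (cM * q z.1)%:E)%E.
  by apply: eq_esum => z /code_index_bounded [z1k z2M]; rewrite Pw_padded_word.
rewrite -(esum_esum (a := fun i c => (cM * q i)%:E)); last first.
  by move=> i j _ _; rewrite lee_fin mulr_ge0.
transitivity (\esum_(i in `I_k.+1) ((g i)%:R * (cM * q i))%:E)%E.
  apply: eq_esum => i _; rewrite esum_II; last by move=> c; rewrite mulr_ge0.
  by rewrite sumr_const card_ord mulr_natl.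
rewrite esum_II; last by move=> i; rewrite mulr_ge0 // mulr_ge0.
by rewrite /bern_poly mulr_sumr; congr _%:E; apply: eq_bigr => i _; rewrite mulrCA !mulrA.
Qed.
End BoundedCounts.
End PaddedCode.

Lemma bern_ratio_block_simulation (R : realType) (D : set R) (f : R -> R) :
  (forall p, D p -> 0 < p < 1) -> has_bern_ratio D f -> has_block_simulation D f.
Proof.
move=> hD [k [d [e [de Pde]]]].
(* the successor keeps the block length [k + M + M] positive *)
pose M := (\max_(i < k.+1) e i).+1.
have eM i : (i <= k)%N -> (e i <= M)%N.
  rewrite -ltnS => ik; apply: leqW.
  exact: (@leq_bigmax_cond _ xpredT (fun j : 'I_k.+1 => e j) (Ordinal ik)).
have dM i : (i <= k)%N -> (d i <= M)%N by move=> ik; exact: leq_trans (de _ ik) (eM _ ik).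
pose S := padded_code k M e; pose A1 := padded_code k M d.
have Sk : S `<=` words (k + M + M) := padded_code_words eM.
have A1S : A1 `<=` S.
  move=> _ [[i c] [/= ik cd] <-]; exists (i, c) => //; split => //=.
  by apply: leq_trans cd (de _ _).
have n0 : (0 < k + M + M)%N by rewrite addn_gt0 orbC.
have A0A1 : (S `\` A1) `&` A1 = set0 by rewrite setIC setDIK.
exists (k + M + M)%N, (S `\` A1), A1; split => //.
- by move=> w [/Sk].
- by move=> w /A1S /Sk.
rewrite /= (setDKU A1S); split.
- exact: (star_cat_disjoint n0 Sk (@subDsetl _ S A1) A1S A0A1).
- by rewrite star_catU (setDKU A1S); exact: prefix_free_star_cat.
move=> p Dp; have /andP[p0 p1] := hD p Dp; have hp : 0 <= p <= 1 by rewrite !ltW.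
have [E0 fDE] := Pde p Dp.
have cM0 : p ^+ M * (1 - p) ^+ M != 0.
  by rewrite mulf_neq0 // expf_neq0 // ?gt_eqF // subr_gt0.
have PS := PL_padded_code eM hp; have PA1 := PL_padded_code dM hp.
rewrite star_catU (setDKU A1S) (PL_star_cat_stop n0 Sk hp (@subset_refl _ S) PS PS).
rewrite (PL_star_cat_stop n0 Sk hp A1S PA1 PS) divff; last exact: mulf_neq0.
by rewrite -mulf_div divff // mul1r fDE.
Qed.

Theorem proposition2p5 (R : realType) (D : set R) (f : R -> R)
  (hD : forall p, D p -> 0 < p < 1)
  (hf : forall p, D p -> 0 < f p < 1) :
  has_block_simulation D f <->
  exists (k : nat) (d e : nat -> nat),
    (forall i, (i <= k)%N -> (d i <= e i)%N) /\
    (forall p, D p -> bern_poly k e p != 0 /\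
                      f p = bern_poly k d p / bern_poly k e p).
Proof.
have hD01 p : D p -> 0 <= p <= 1 by move=> /hD /andP[p0 p1]; rewrite !ltW.
by split; [exact: block_simulation_bern_ratio | exact: bern_ratio_block_simulation].
Qed.
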